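(* Let $\mathbb{F}$ be an infinite field with $\operatorname{char}(\mathbb{F})\neq 2$ and let $G$ be a non-abelian group with a group involution $\ast$ and a non-trivial orientation $\sigma:G\to\{\pm1\}$ such that $gg^\ast\in N=\ker\sigma$ for all $g\in G$. Suppose $\mathbb{F}G$ is normal with respect to the oriented involution $\circledast$ and that $N$, with the restriction of $\ast$, is an SLC-group with unique non-identity commutator $s$. Then there exists $g_0\in G\setminus N$ such that $g_0\in C_G(N)$ and $g_0^\ast=sg_0$. Consequently, $g_0$ is central in $G$.
   Context: A group involution on $G$ is a map $\ast:G\to G$ with $(gh)^\ast=h^\ast g^\ast$ and $(g^\ast)^\ast=g$. An orientation is a group homomorphism $\sigma:G\to\{\pm1\}$. The oriented involution is $(\sum_g\alpha_g g)^\circledast=\sum_g\alpha_g\sigma(g)g^\ast$ on $\mathbb{F}G$. $\mathbb{F}G$ is normal if $\alpha\alpha^\circledast=\alpha^\circledast\alpha$ for all $\alpha\in\mathbb{F}G$. $C_G(N)$ is the centralizer of $N$ in $G$. $(g,h)=g^{-1}h^{-1}gh$. A group $H$ is an LC-group if it is non-abelian and for all $g,h\in H$: $gh=hg$ iff at least one of $g,h,gh$ is in $\zeta(H)$. $H$ with involution $\ast$ is an SLC-group if it is an LC-group with a unique non-identity commutator $s$ (i.e. $\{(g,h):g,h\in H\}=\{1,s\}$) and $h^\ast=h$ for $h\in\zeta(H)$, $h^\ast=sh$ for $h\notin\zeta(H)$. *)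

From HB Require Import structures.
From mathcomp Require Import all_boot all_order all_algebra all_fingroup.
Set Implicit Arguments. Unset Strict Implicit. Unset Printing Implicit Defensive.
Import GRing.Theory.

Section Defs.
Variable G : groupType.
Local Open Scope group_scope.

Definition group_involution (star : G -> G) : Prop :=
  (forall g h, star (g * h) = star h * star g) /\ (forall g, star (star g) = g).

Definition orientation (sigma : G -> int) : Prop :=
  (forall g, sigma g = 1%R \/ sigma g = (-1)%R) /\
  (forall g h, sigma (g * h) = (sigma g * sigma h)%R).

Definition kerN (sigma : G -> int) : pred G := fun g => sigma g == 1%R.

Definition zeta (N : pred G) (h : G) : Prop :=
  h \in N /\ (forall m, m \in N -> h * m = m * h).

Definition LC_group (N : pred G) : Prop :=
  (exists g h, [/\ g \in N, h \in N & g * h <> h * g]) /\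
  (forall g h, g \in N -> h \in N ->
     (g * h = h * g <-> [\/ zeta N g, zeta N h | zeta N (g * h)])).

(* N with involution star is an SLC-group with unique non-identity
   commutator s; commutator (g,h) = g^-1 h^-1 g h = [~ g, h]. *)
Definition SLC_group (N : pred G) (star : G -> G) (s : G) : Prop :=
  [/\ LC_group N,
      s <> 1,
      (forall g h, g \in N -> h \in N -> [~ g, h] = 1 \/ [~ g, h] = s),
      (exists g h, [/\ g \in N, h \in N & [~ g, h] = s]) &
      (forall h, h \in N ->
         (zeta N h -> star h = h) /\ (~ zeta N h -> star h = s * h))].

End Defs.

Section GroupRing.
Variables (F : fieldType) (G : groupType).

(* Elements of the group algebra FG are written as formal finite sums
   sum_i a_i g_i, represented by a list of pairs (a_i, g_i); two formal sums
   denote the same element iff all their coefficients agree. *)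
Definition gr_coef (x : seq (F * G)) (h : G) : F :=
  (\sum_(p <- x | p.2 == h) p.1)%R.

Definition gr_mul (x y : seq (F * G)) : seq (F * G) :=
  [seq ((p.1 * q.1)%R, (p.2 * q.2)%g) | p <- x, q <- y].

Definition gr_oinv (sigma : G -> int) (star : G -> G) (x : seq (F * G))
  : seq (F * G) :=
  [seq ((p.1 * (sigma p.2)%:~R)%R, star p.2) | p <- x].

Definition gr_normal (sigma : G -> int) (star : G -> G) : Prop :=
  forall x : seq (F * G), forall h : G,
    gr_coef (gr_mul x (gr_oinv sigma star x)) h =
    gr_coef (gr_mul (gr_oinv sigma star x) x) h.

End GroupRing.

(* Normality of FG, tested on the elements g and g + h, forces g g^* = g^* g
   and, since char F <> 2, the coincidence of two 2-element multisets built from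
   g, h, g^* and h^* (which ones depends on sigma g and sigma h).  For pairs taken
   from N and G \ N this shows that an element h outside N either centralizes N,
   and then h^* = s h, or satisfies h^* = h.  The second alternative cannot hold
   on a whole coset gN: if g, ga, gb and gab were all fixed by *, with a, b in N
   not commuting, then gab = s^2 abg = s abg, so s = 1.  Finally, an element
   outside N centralizing N is central in G because N has index 2. *)

From HB Require Import structures.
From mathcomp Require Import all_boot all_order all_algebra all_fingroup.
From mathcomp Require Import ring.
From Stdlib Require Import Classical.
Set Implicit Arguments.
Unset Strict Implicit.
Unset Printing Implicit Defensive.
Import GRing.Theory.
Local Open Scope group_scope.

Section GroupRingNormal.
Variables (F : fieldType) (G : groupType).
Local Notation delta g k := ((((g : G)%g == (k : G)%g)%:R)%R : F).

Lemma gr_coef_cons (c : F) (g : G) x k :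
  gr_coef ((c, g) :: x) k = (delta g k * c + gr_coef x k)%R.
Proof. by rewrite /gr_coef big_cons /=; case: eqP; rewrite ?mul1r ?mul0r ?add0r. Qed.

Lemma gr_coef_nil (k : G) : gr_coef [::] k = 0%R :> F.
Proof. by rewrite /gr_coef big_nil. Qed.

Lemma delta_inj (x y : G) : (forall k, delta x k = delta y k) -> x = y.
Proof.
move=> /(_ x); rewrite eqxx; case: eqP => // _ /eqP.
by rewrite oner_eq0.
Qed.

Lemma delta2_inj (x y u v : G) : (2%:R : F)%R != 0%R ->
  (forall k, delta x k + delta y k = delta u k + delta v k)%R ->
  (x = u /\ y = v) \/ (x = v /\ y = u).
Proof.
move=> char2 E.
case: (eqVneq u x) E => [-> E|ux E].
  by left; split=> //; apply: delta_inj => k; apply: (addrI (delta x k)).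
case: (eqVneq v x) E => [-> E|vx E].
  by right; split=> //; apply: delta_inj => k; apply: (addrI (delta x k)); rewrite E addrC.
move: (E x); rewrite eqxx (negbTE ux) (negbTE vx) addr0.
by case: eqP => _ /eqP; rewrite ?(negbTE char2) ?addr0 ?oner_eq0.
Qed.

Variables (sigma : G -> int) (star : G -> G).
Hypothesis sigma_sign : forall g, sigma g = 1%R \/ sigma g = (-1)%R.
Hypothesis normal : gr_normal F sigma star.
Local Notation sg g := (((sigma g)%:~R)%R : F).

Lemma sigma_neq0 g : sg g != 0%R.
Proof. by case: (sigma_sign g) => ->; rewrite ?rmorphN rmorph1 ?oppr_eq0 oner_eq0. Qed.

Lemma normal_single h k : (sg h * delta (h * star h) k = sg h * delta (star h * h) k)%R.
Proof.
have := normal [:: (1%R, h)] k.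
by rewrite /gr_mul /gr_oinv /= !gr_coef_cons gr_coef_nil !(mul1r, mulr1, addr0) !(mulrC (sg h)).
Qed.

Lemma mul_star_commute h : h * star h = star h * h.
Proof. by apply: delta_inj => k; apply: (mulfI (sigma_neq0 h)); apply: normal_single. Qed.

Lemma normal_pair a b k :
  (sg b * delta (a * star b) k + sg a * delta (b * star a) k
   = sg a * delta (star a * b) k + sg b * delta (star b * a) k)%R.
Proof.
have E := normal [:: (1%R, a); (1%R, b)] k.
move: E; rewrite /gr_mul /gr_oinv /= !gr_coef_cons gr_coef_nil !(mul1r, mulr1, addr0).
rewrite !(mulrC _ (sg _)) (normal_single a k) (normal_single b k) => E.
by move/addrI: E; rewrite !addrA => /addIr.
Qed.

Hypothesis char2 : (2%:R : F)%R != 0%R.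

Lemma normal_pair_same_sign a b : sigma b = sigma a ->
  (a * star b = star a * b /\ b * star a = star b * a) \/
  (a * star b = star b * a /\ b * star a = star a * b).
Proof.
move=> sab; apply: delta2_inj => // k.
by have := normal_pair a b k; rewrite sab -!mulrDr => /(mulfI (sigma_neq0 a)).
Qed.

Lemma normal_pair_opposite_sign a b : sigma b = (- sigma a)%R ->
  (b * star a = star a * b /\ star b * a = a * star b) \/
  (b * star a = a * star b /\ star b * a = star a * b).
Proof.
move=> sab; apply: delta2_inj => // k; apply: (mulfI (sigma_neq0 a)).
move/eqP: (normal_pair a b k); rewrite sab rmorphN -subr_eq0 => /eqP E0.
by apply/eqP; rewrite -subr_eq0 -E0; apply/eqP; ring.
Qed.
End GroupRingNormal.

Definition centralizes (G : groupType) (A : pred G) (h : G) : Prop :=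
  forall n, n \in A -> h * n = n * h.

Lemma not_zeta_of_noncommute (G : groupType) (A : pred G) (x y : G) :
  y \in A -> x * y <> y * x -> ~ zeta A x.
Proof. by move=> yA xy [_ cx]; apply: xy; apply: cx. Qed.

Section Orientation.
Variables (G : groupType) (sigma : G -> int).
Hypothesis orient : orientation sigma.
Local Notation N := (kerN sigma).

Lemma in_kerN g : (g \in N) = (sigma g == 1%R).
Proof. by []. Qed.

Lemma sigmaM g h : sigma (g * h) = (sigma g * sigma h)%R.
Proof. exact: orient.2. Qed.

Lemma sigma_notin_kerN g : g \notin N -> sigma g = (-1)%R.
Proof. by rewrite in_kerN; case: (orient.1 g) => ->. Qed.

Lemma sigma_sqr g : (sigma g * sigma g = 1)%R.
Proof. by case: (orient.1 g) => ->. Qed.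

Lemma sigma1 : sigma 1 = 1%R.
Proof. by have := sigmaM 1 1; rewrite mulg1; case: (orient.1 1) => ->. Qed.

Lemma sigmaV g : sigma g^-1 = sigma g.
Proof.
have := sigmaM g^-1 g; rewrite mulVg sigma1.
by case: (orient.1 g) => ->; case: (orient.1 g^-1) => ->.
Qed.

Lemma kerN_mul x y : x \in N -> y \in N -> x * y \in N.
Proof. by rewrite !in_kerN sigmaM => /eqP -> /eqP ->. Qed.

Lemma notin_kerN_mulr x n : x \notin N -> n \in N -> x * n \notin N.
Proof. by move=> /sigma_notin_kerN xN; rewrite !in_kerN sigmaM xN => /eqP ->. Qed.

Lemma kerN_conjg x y : x \in N -> x ^ y \in N.
Proof. by rewrite !in_kerN conjgE !sigmaM sigmaV => /eqP ->; rewrite mul1r sigma_sqr. Qed.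

Lemma kerN_mulVg x y : x \notin N -> y \notin N -> x^-1 * y \in N.
Proof. by move=> xN yN; rewrite in_kerN sigmaM sigmaV !sigma_notin_kerN. Qed.

Lemma central_of_centralizes_kerN h :
  h \notin N -> centralizes N h -> forall g, h * g = g * h.
Proof.
move=> hN ch g; have [gN|gN] := boolP (g \in N); first exact: ch.
by rewrite -(mulKVg h g) -mulgA -(ch _ (kerN_mulVg hN gN)) mulgA.
Qed.

End Orientation.

Section KernelCommutators.
Variables (G : groupType) (star : G -> G) (sigma : G -> int) (s a b : G).
Hypothesis inv : group_involution star.
Hypothesis orient : orientation sigma.
Local Notation N := (kerN sigma).
Hypothesis s_neq1 : s <> 1.
Hypothesis commN : forall g h, g \in N -> h \in N -> [~ g, h] = 1 \/ [~ g, h] = s.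
Hypotheses (aN : a \in N) (bN : b \in N) (ab_s : [~ a, b] = s).
Hypothesis star_noncentral : forall n, n \in N -> ~ zeta N n -> star n = s * n.

Lemma s_central x : s * x = x * s.
Proof.
rewrite conjgC; congr (_ * _).
have := commN (kerN_conjg orient x aN) (kerN_conjg orient x bN).
by rewrite -conjRg ab_s => -[/eqP|//]; rewrite conjg_eq1 => /eqP.
Qed.

Lemma mulg_s x y : x * (s * y) = s * (x * y).
Proof. by rewrite mulgA -s_central mulgA. Qed.

Lemma commute_of_commute_s x y : x * (s * y) = s * y * x -> x * y = y * x.
Proof. by rewrite mulg_s -mulgA => /mulgI. Qed.

Lemma kerN_noncommute x y : x \in N -> y \in N -> x * y <> y * x ->
  y * x = s * (x * y).
Proof.
move=> xN yN xy; case: (commN yN xN) => E; last by rewrite commgC E s_central.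
by case: xy; apply/esym/commgP; rewrite E.
Qed.

Lemma noncommute_ab : a * b <> b * a.
Proof. by move/commgP; rewrite ab_s; move/eqP. Qed.

Lemma not_zeta_a : ~ zeta N a.
Proof. exact: not_zeta_of_noncommute bN noncommute_ab. Qed.

Lemma not_zeta_b : ~ zeta N b.
Proof. by apply: not_zeta_of_noncommute aN _ => ba; apply: noncommute_ab. Qed.

Lemma not_zeta_ab : ~ zeta N (a * b).
Proof.
apply: not_zeta_of_noncommute aN _; rewrite -!mulgA => /mulgI ba.
exact: noncommute_ab (esym ba).
Qed.

Lemma star_nonfixed_in_coset g : g \notin N -> exists2 n, n \in N & star (g * n) <> g * n.
Proof.
move=> gN; apply: NNPP => nofix.
have fixed n : n \in N -> star (g * n) = g * n.
  by move=> nN; apply: NNPP => gn; apply: nofix; exists n.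
have star_g : star g = g by have := fixed 1; rewrite mulg1 in_kerN sigma1 //; apply.
have gn n : n \in N -> ~ zeta N n -> g * n = s * n * g.
  by move=> nN nz; rewrite -(fixed n nN) inv.1 star_g (star_noncentral nN nz).
have := gn _ (kerN_mul orient aN bN) not_zeta_ab.
rewrite mulgA (gn a aN not_zeta_a) -!mulgA (gn b bN not_zeta_b) -!mulgA mulg_s => /mulgI.
by rewrite -{2}[a * _]mul1g => /mulIg /s_neq1.
Qed.

Section Normal.
Variable F : fieldType.
Hypothesis char2 : (2%:R : F)%R != 0%R.
Hypothesis normal : gr_normal F sigma star.

Lemma star_of_centralizes h : h \notin N -> centralizes N h -> star h = s * h.
Proof.
move=> hN ch.
have shb : sigma (h * b) = (- sigma a)%R.
  by rewrite sigmaM // (sigma_notin_kerN orient hN) (eqP aN) (eqP bN).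
have := normal_pair_opposite_sign orient.1 normal char2 shb.
rewrite inv.1 (star_noncentral aN not_zeta_a) (star_noncentral bN not_zeta_b).
case=> -[E _].
  move/commute_of_commute_s: E; rewrite [a * _]mulgA -(ch a aN) -!mulgA => /mulgI ba.
  by case: noncommute_ab.
move: E; rewrite mulg_s -(mulgA h) (kerN_noncommute aN bN noncommute_ab) mulg_s.
rewrite (ch _ (kerN_mul orient aN bN)) -(mulgA s b) mulg_s => /mulgI.
by rewrite -mulg_s -!mulgA => /mulgI /mulgI.
Qed.

Lemma star_fixed_of_noncommute h n :
  h \notin N -> n \in N -> ~ zeta N n -> h * n <> n * h -> star h = h.
Proof.
move=> hN nN nz hn.
have sh : sigma h = (- sigma n)%R by rewrite (sigma_notin_kerN orient hN) (eqP nN).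
have shn : sigma (h * n) = sigma h by rewrite sigmaM // (eqP nN) mulr1.
have := normal_pair_opposite_sign orient.1 normal char2 sh.
rewrite (star_noncentral nN nz) => -[[/commute_of_commute_s // E1 E2]|[E1 E2]].
have := normal_pair_same_sign orient.1 normal char2 shn.
rewrite inv.1 (star_noncentral nN nz) !mulgA -(mul_star_commute orient.1 normal) -!mulgA E2.
case=> -[A1 A2].
  by move: A1; rewrite !mulgA => /mulgI.
by move/mulgI: A2; rewrite -E1 => /commute_of_commute_s.
Qed.

Lemma centralizes_of_star_nonfixed h : h \notin N -> star h <> h -> centralizes N h.
Proof.
move=> hN hstar n nN; have [//|/eqP hn] := eqVneq (h * n) (n * h).
case: hstar; have [zn|nz] := classic (zeta N n); last first.
  exact: star_fixed_of_noncommute hN nN nz hn.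
have [ha|/eqP ha] := eqVneq (h * a) (a * h); last first.
  exact: star_fixed_of_noncommute hN aN not_zeta_a ha.
apply: (star_fixed_of_noncommute hN (kerN_mul orient nN aN)).
  apply: not_zeta_of_noncommute bN _ => nab; apply: noncommute_ab.
  by move: nab; rewrite mulgA -(zn.2 b bN) -!mulgA => /mulgI.
by rewrite -mulgA -ha !mulgA => /mulIg.
Qed.

Lemma exists_centralizing_star_s g :
  g \notin N -> exists h, [/\ h \notin N, centralizes N h & star h = s * h].
Proof.
move=> gN; have [n nN gn_nonfixed] := star_nonfixed_in_coset gN.
have gnN := notin_kerN_mulr orient gN nN.
have c_gn := centralizes_of_star_nonfixed gnN gn_nonfixed.
by exists (g * n); split=> //; apply: star_of_centralizes.
Qed.

End Normal.
End KernelCommutators.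

Theorem lemma11 (F : fieldType) (G : groupType) (star : G -> G)
    (sigma : G -> int) (s : G) :
  ~ (exists e : seq F, forall a : F, a \in e) ->
  ((2%:R : F) != 0)%R ->
  (exists g h : G, g * h <> h * g) ->
  group_involution star ->
  orientation sigma ->
  (exists g : G, sigma g <> 1%R) ->
  (forall g : G, g * star g \in kerN sigma) ->
  gr_normal F sigma star ->
  SLC_group (kerN sigma) star s ->
  exists g0 : G,
    [/\ g0 \notin kerN sigma,
        (forall n : G, n \in kerN sigma -> g0 * n = n * g0),
        star g0 = s * g0 &
        (forall g : G, g0 * g = g * g0)].
Proof.
move=> _ char2 _ inv orient [g /eqP gN] _ normal
  [_ s_neq1 commN [a [b [aN bN ab_s]]] star_N].
have star_noncentral n : n \in kerN sigma -> ~ zeta (kerN sigma) n -> star n = s * n.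
  by move=> nN; apply: (star_N n nN).2.
have [h [hN c_h star_h]] := exists_centralizing_star_s inv orient s_neq1 commN aN bN ab_s
  star_noncentral char2 normal gN.
by exists h; split=> //; exact: (central_of_centralizes_kerN orient hN c_h).
Qed.
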